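(* Let $n\ge2$ and let $B_1,\dots,B_n$ be points in the plane with $B_i\ne B_{i+1}$ for all $i$ (indices mod $n$). Let $\varphi_i$ be the direction of the side $B_iB_{i+1}$ and $\theta_i=\varphi_i-\varphi_{i-1}$ the exterior angle at $B_i$. If $n$ is odd, the polygon has a unique framing. If $n$ is even, the polygon admits a framing if and only if $$\sum_{i\ \mathrm{odd}}\theta_i\equiv\sum_{i\ \mathrm{even}}\theta_i\equiv 0 \pmod{\pi},$$ in which case there is a one-parameter family of framings.
   Context: For nonzero plane vectors $u,v$, $\angle(u,v)\in\mathbb{R}/2\pi\mathbb{Z}$ is the angle through which $u$ must be rotated counterclockwise to align with $v$. A framing of the polygon $B_1,\dots,B_n$ is an assignment of unit vectors $u_1,\dots,u_n$ to its vertices such that $\angle(u_i,B_{i+1}-B_i)=\angle(B_{i+1}-B_i,u_{i+1})$ for all $i$ (indices mod $n$). Framings $(u_i)$ and $(-u_i)$ are identified (so uniqueness is up to this involution). *)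

From Stdlib Require Import Reals List Lra.
Open Scope R_scope.

Definition vec := (R * R)%type.

Definition vsub (a b : vec) : vec := (fst a - fst b, snd a - snd b).
Definition vopp (a : vec) : vec := (- fst a, - snd a).
Definition vscale (r : R) (a : vec) : vec := (r * fst a, r * snd a).
Definition is_unit (u : vec) : Prop := fst u * fst u + snd u * snd u = 1.

Definition rot (t : R) (a : vec) : vec :=
  (cos t * fst a - sin t * snd a, sin t * fst a + cos t * snd a).

Definition same_dir (a b : vec) : Prop := exists r, 0 < r /\ b = vscale r a.

(* angle(u,v) = t (mod 2pi): rotating u counterclockwise by t aligns it with v *)
Definition angle_is (u v : vec) (t : R) : Prop := same_dir (rot t u) v.

(* angle(u,v) = angle(u',v') in R/2piZ *)
Definition angle_eq (u v u' v' : vec) : Prop :=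
  exists t, angle_is u v t /\ angle_is u' v' t.

(* 0-based indices 0..n-1, taken mod n *)
Definition nxt (n i : nat) : nat := ((i + 1) mod n)%nat.
Definition prv (n i : nat) : nat := ((i + n - 1) mod n)%nat.

Definition side (n : nat) (B : nat -> vec) (i : nat) : vec := vsub (B (nxt n i)) (B i).

Definition framing (n : nat) (B : nat -> vec) (u : nat -> vec) : Prop :=
  (forall i, (i < n)%nat -> is_unit (u i)) /\
  (forall i, (i < n)%nat ->
     angle_eq (u i) (side n B i) (side n B i) (u (nxt n i))).

(* framings are identified up to u |-> -u *)
Definition same_framing (n : nat) (u v : nat -> vec) : Prop :=
  (forall i, (i < n)%nat -> v i = u i) \/ (forall i, (i < n)%nat -> v i = vopp (u i)).

Definition is_direction (phi : R) (e : vec) : Prop := same_dir (cos phi, sin phi) e.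

Definition ext_angle (n : nat) (phi : nat -> R) (i : nat) : R := phi i - phi (prv n i).

Definition sum_sel (n : nat) (P : nat -> bool) (f : nat -> R) : R :=
  fold_right Rplus 0 (map f (filter P (seq 0 n))).

Definition cong_pi (x : R) : Prop := exists k : Z, x = IZR k * PI.

From Stdlib Require Import Reals Lra Lia Psatz List.
Open Scope R_scope.

(* Writing u_i = (cos a_i, sin a_i), the framing condition at side i says exactly
   that u_{i+1} is the mirror image of u_i in the line of direction phi_i, i.e.
   a_{i+1} = 2 phi_i - a_i.  Going once around the polygon, a_0 is sent to
   a_0 - 2A (n even) or 2A - a_0 (n odd), where A = sum_i (-1)^i phi_i.  For n odd
   the closing condition fixes a_0 = A modulo pi; for n even it holds for all a_0
   iff A = 0 modulo pi, and A is, up to sign, the sum of the exterior angles of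
   either parity. *)

Definition polar (t : R) : vec := (cos t, sin t).

Lemma polar_unit t : is_unit (polar t).
Proof. unfold is_unit, polar; simpl. pose proof (sin2_cos2 t). unfold Rsqr in *. lra. Qed.

Lemma unit_polar u : is_unit u -> exists t, u = polar t.
Proof.
  destruct u as [c s]; unfold is_unit, polar; simpl; intro Hu.
  assert (Hc : -1 <= c <= 1) by nra.
  assert (Hs : sin (acos c) = Rabs s).
  { rewrite sin_acos by exact Hc. rewrite <- sqrt_Rsqr_abs. f_equal. unfold Rsqr. lra. }
  destruct (Rle_dec 0 s).
  - exists (acos c). rewrite cos_acos, Hs, Rabs_right by lra. reflexivity.
  - exists (- acos c). rewrite cos_neg, sin_neg, cos_acos, Hs, Rabs_left by lra.
    f_equal. ring.
Qed.

Lemma rot_polar t a : rot t (polar a) = polar (t + a).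
Proof. unfold rot, polar; simpl. rewrite cos_plus, sin_plus. f_equal; ring. Qed.

Lemma rot_vscale t r a : rot t (vscale r a) = vscale r (rot t a).
Proof. unfold rot, vscale; simpl. f_equal; ring. Qed.

Lemma same_dir_vscale_r r a b : 0 < r -> same_dir a (vscale r b) <-> same_dir a b.
Proof.
  destruct a as [a1 a2], b as [b1 b2]; unfold same_dir, vscale; simpl; intro Hr.
  split; intros [s [Hs E]]; injection E as E1 E2.
  - exists (s / r). split.
    + apply Rdiv_lt_0_compat; assumption.
    + f_equal; apply (Rmult_eq_reg_l r); try lra;
        [rewrite E1 | rewrite E2]; field; lra.
  - exists (r * s). split.
    + apply Rmult_lt_0_compat; assumption.
    + rewrite E1, E2. f_equal; ring.
Qed.

Lemma same_dir_vscale_l r a b : 0 < r -> same_dir (vscale r a) b <-> same_dir a b.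
Proof.
  destruct a as [a1 a2], b as [b1 b2]; unfold same_dir, vscale; simpl; intro Hr.
  split; intros [s [Hs E]]; injection E as E1 E2.
  - exists (s * r). split.
    + apply Rmult_lt_0_compat; assumption.
    + rewrite E1, E2. f_equal; ring.
  - exists (s / r). split.
    + apply Rdiv_lt_0_compat; assumption.
    + rewrite E1, E2. f_equal; field; lra.
Qed.

Lemma same_dir_unit a b : is_unit a -> is_unit b -> same_dir a b <-> b = a.
Proof.
  intros Ha Hb. split.
  - intros [r [Hr E]]. subst b.
    destruct a as [a1 a2]; unfold is_unit, vscale in *; simpl in *.
    assert (r = 1) by nra. subst r. f_equal; ring.
  - intros ->. exists 1. split; [lra |].
    destruct a; unfold vscale; simpl; f_equal; ring.
Qed.

Definition line_refl (f : R) (u : vec) : vec := rot (2 * f) (fst u, - snd u).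

Lemma line_refl_polar f a : line_refl f (polar a) = polar (2 * f - a).
Proof.
  unfold line_refl, polar; simpl.
  rewrite <- cos_neg, <- sin_neg. apply (rot_polar (2 * f) (- a)).
Qed.

Lemma line_refl_opp f u : line_refl f (vopp u) = vopp (line_refl f u).
Proof. unfold line_refl, rot, vopp; simpl. f_equal; ring. Qed.

Lemma angle_eq_line_refl u v r f : is_unit u -> is_unit v -> 0 < r ->
  angle_eq u (vscale r (polar f)) (vscale r (polar f)) v <-> v = line_refl f u.
Proof.
  intros Hu Hv Hr. destruct (unit_polar u Hu) as [a ->].
  rewrite line_refl_polar. unfold angle_eq, angle_is.
  split.
  - intros [t [H1 H2]].
    rewrite same_dir_vscale_r, rot_polar, same_dir_unit in H1
      by (apply polar_unit || lra).
    rewrite rot_vscale, same_dir_vscale_l, rot_polar, same_dir_unit in H2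
      by (apply polar_unit || assumption || lra).
    rewrite H2.
    replace (t + f) with (f - a + (t + a)) by ring.
    rewrite <- rot_polar, <- H1, rot_polar. f_equal. ring.
  - intros ->. exists (f - a).
    rewrite same_dir_vscale_r, rot_vscale, same_dir_vscale_l, !rot_polar by lra.
    split; apply same_dir_unit; try apply polar_unit; f_equal; ring.
Qed.

Fixpoint refl_iter (phi : nat -> R) (w : vec) (k : nat) : vec :=
  match k with
  | O => w
  | S k => line_refl (phi k) (refl_iter phi w k)
  end.

Lemma refl_iter_opp phi w k : refl_iter phi (vopp w) k = vopp (refl_iter phi w k).
Proof. induction k as [|k IH]; simpl; [| rewrite IH, line_refl_opp]; reflexivity. Qed.

Lemma sum_sel_S k P f :
  sum_sel (S k) P f = sum_sel k P f + (if P k then f k else 0).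
Proof.
  unfold sum_sel. rewrite seq_S, filter_app, map_app, fold_right_app.
  assert (Hfold : forall a l, fold_right Rplus a l = fold_right Rplus 0 l + a).
  { intros a l. induction l as [|x l IH]; simpl; [| rewrite IH]; ring. }
  simpl. destruct (P k); simpl; rewrite Hfold; ring.
Qed.

Definition alt_sum (phi : nat -> R) (k : nat) : R :=
  sum_sel k Nat.even phi - sum_sel k Nat.odd phi.

Lemma alt_sum_S phi k :
  alt_sum phi (S k) = alt_sum phi k + (if Nat.even k then phi k else - phi k).
Proof.
  unfold alt_sum. rewrite !sum_sel_S, <- Nat.negb_even.
  destruct (Nat.even k); simpl; ring.
Qed.

Lemma refl_iter_polar phi b k :
  refl_iter phi (polar b) k =
  polar (if Nat.even k then b - 2 * alt_sum phi k else 2 * alt_sum phi k - b).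
Proof.
  induction k as [|k IH].
  - assert (alt_sum phi 0 = 0) as -> by (unfold alt_sum, sum_sel; simpl; ring).
    cbn. f_equal. ring.
  - cbn [refl_iter]. rewrite IH, line_refl_polar, alt_sum_S, Nat.even_succ, <- Nat.negb_even.
    destruct (Nat.even k); cbn [negb]; f_equal; ring.
Qed.

Lemma polar_sub_eq_add x d : polar (x - d) = polar (x + d) <-> sin d = 0.
Proof.
  unfold polar. rewrite cos_minus, cos_plus, sin_minus, sin_plus.
  pose proof (sin2_cos2 x) as Hx. unfold Rsqr in Hx.
  split.
  - intro E. injection E as E1 E2.
    assert (sin x * sin d = 0 /\ cos x * sin d = 0) as [H1 H2] by lra.
    transitivity (sin d * (sin x * sin x + cos x * cos x)); [rewrite Hx; ring |].
    transitivity (sin x * (sin x * sin d) + cos x * (cos x * sin d)); [ring |].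
    rewrite H1, H2. ring.
  - intros ->. f_equal; ring.
Qed.

Lemma polar_add_sin0 x d : sin d = 0 ->
  polar (x + d) = polar x \/ polar (x + d) = vopp (polar x).
Proof.
  intro Hd. pose proof (sin2_cos2 d) as H. unfold Rsqr in H. rewrite Hd in H.
  unfold polar, vopp; simpl. rewrite cos_plus, sin_plus, Hd.
  assert (Hc : (cos d - 1) * (cos d + 1) = 0) by nra.
  destruct (Rmult_integral _ _ Hc); [left; replace (cos d) with 1 by lra
                                    | right; replace (cos d) with (-1) by lra];
    f_equal; ring.
Qed.

Lemma refl_iter_closed_even phi n b : Nat.even n = true ->
  refl_iter phi (polar b) n = polar b <-> sin (alt_sum phi n) = 0.
Proof.
  intro Hn. rewrite refl_iter_polar, Hn, <- polar_sub_eq_add.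
  replace (b - alt_sum phi n - alt_sum phi n) with (b - 2 * alt_sum phi n) by ring.
  replace (b - alt_sum phi n + alt_sum phi n) with b by ring.
  reflexivity.
Qed.

Lemma refl_iter_closed_odd phi n b : Nat.even n = false ->
  refl_iter phi (polar b) n = polar b <-> sin (b - alt_sum phi n) = 0.
Proof.
  intro Hn. rewrite refl_iter_polar, Hn, <- polar_sub_eq_add.
  replace (alt_sum phi n - (b - alt_sum phi n)) with (2 * alt_sum phi n - b) by ring.
  replace (alt_sum phi n + (b - alt_sum phi n)) with b by ring.
  reflexivity.
Qed.

Lemma nxt_lt n i : (i + 1 < n)%nat -> nxt n i = (i + 1)%nat.
Proof. intro H. apply Nat.mod_small, H. Qed.

Lemma nxt_last n : (1 <= n)%nat -> nxt n (n - 1) = 0%nat.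
Proof. intro H. unfold nxt. replace (n - 1 + 1)%nat with n by lia. apply Nat.Div0.mod_same. Qed.

Lemma prv_0 n : (1 <= n)%nat -> prv n 0 = (n - 1)%nat.
Proof. intro H. apply Nat.mod_small. lia. Qed.

Lemma prv_pos n i : (1 <= i < n)%nat -> prv n i = (i - 1)%nat.
Proof.
  intro H. unfold prv. replace (i + n - 1)%nat with (i - 1 + 1 * n)%nat by lia.
  rewrite Nat.Div0.mod_add, Nat.mod_small; lia.
Qed.

Section Framing.
Variables (n : nat) (B : nat -> vec) (phi : nat -> R).
Hypothesis n_pos : (1 <= n)%nat.
Hypothesis side_dir : forall i, (i < n)%nat -> is_direction (phi i) (side n B i).

Lemma framing_step i u v : (i < n)%nat -> is_unit u -> is_unit v ->
  angle_eq u (side n B i) (side n B i) v <-> v = line_refl (phi i) u.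
Proof.
  intros Hi Hu Hv. destruct (side_dir i Hi) as [r [Hr ->]].
  apply angle_eq_line_refl; assumption.
Qed.

Lemma framing_refl_iter v : framing n B v ->
  (forall k, (k < n)%nat -> v k = refl_iter phi (v 0%nat) k) /\
  refl_iter phi (v 0%nat) n = v 0%nat.
Proof.
  intros [Hunit Hangle].
  assert (Hk : forall k, (k < n)%nat -> v k = refl_iter phi (v 0%nat) k).
  { induction k as [|k IH]; intro Hk; [reflexivity |].
    simpl. rewrite <- IH by lia.
    specialize (Hangle k ltac:(lia)). rewrite nxt_lt, Nat.add_1_r in Hangle by lia.
    apply framing_step in Hangle; auto with arith. }
  split; [exact Hk |].
  specialize (Hangle (n - 1)%nat ltac:(lia)). rewrite nxt_last in Hangle by lia.
  apply framing_step in Hangle; try apply Hunit; try lia.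
  replace n with (S (n - 1)) at 1 by lia. simpl.
  rewrite <- Hk by lia. symmetry. exact Hangle.
Qed.

Lemma refl_iter_framing b : refl_iter phi (polar b) n = polar b ->
  framing n B (refl_iter phi (polar b)).
Proof.
  intro Hclosed.
  assert (Hunit : forall k, is_unit (refl_iter phi (polar b) k))
    by (intro k; rewrite refl_iter_polar; apply polar_unit).
  split; [intros; apply Hunit |].
  intros i Hi. apply framing_step; auto.
  destruct (Nat.lt_ge_cases (i + 1) n).
  - rewrite nxt_lt, Nat.add_1_r by assumption. reflexivity.
  - replace i with (n - 1)%nat by lia. rewrite nxt_last by lia.
    simpl. rewrite <- Hclosed at 1. replace n with (S (n - 1)) at 1 by lia. reflexivity.
Qed.

Lemma framing_polar v : framing n B v -> exists b, v 0%nat = polar b.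
Proof. intros [Hunit _]. apply unit_polar, Hunit. lia. Qed.

Lemma framing_odd : Nat.even n = false ->
  exists u, framing n B u /\ forall v, framing n B v -> same_framing n u v.
Proof.
  intro Hn. set (A := alt_sum phi n).
  exists (refl_iter phi (polar A)). split.
  - apply refl_iter_framing, refl_iter_closed_odd; [exact Hn |].
    unfold A. rewrite Rminus_diag. apply sin_0.
  - intros v Hv. destruct (framing_polar v Hv) as [b Hb].
    destruct (framing_refl_iter v Hv) as [Hk Hclosed].
    rewrite Hb, refl_iter_closed_odd in Hclosed by exact Hn.
    replace b with (A + (b - A)) in Hb by ring.
    destruct (polar_add_sin0 A (b - A) Hclosed) as [Hs | Hs];
      rewrite Hs in Hb; [left | right]; intros i Hi;
      rewrite Hk, Hb by exact Hi; [| apply refl_iter_opp]; reflexivity.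
Qed.

Lemma framing_even_iff : Nat.even n = true ->
  (exists u, framing n B u) <-> sin (alt_sum phi n) = 0.
Proof.
  intro Hn. split.
  - intros [v Hv]. destruct (framing_polar v Hv) as [b Hb].
    destruct (framing_refl_iter v Hv) as [_ Hclosed].
    rewrite Hb, refl_iter_closed_even in Hclosed; assumption.
  - intro HA. exists (refl_iter phi (polar 0)).
    apply refl_iter_framing, refl_iter_closed_even; assumption.
Qed.

Lemma framing_even_start : Nat.even n = true -> sin (alt_sum phi n) = 0 ->
  forall w, is_unit w -> framing n B (refl_iter phi w).
Proof.
  intros Hn HA w Hw. destruct (unit_polar w Hw) as [b ->].
  apply refl_iter_framing, refl_iter_closed_even; assumption.
Qed.

End Framing.

Lemma sum_sel_odd_ext_angle n phi m : (2 * m <= n)%nat ->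
  sum_sel (2 * m) Nat.odd (ext_angle n phi) = - alt_sum phi (2 * m).
Proof.
  induction m as [|m IH]; intro Hm.
  - unfold alt_sum, sum_sel. simpl. ring.
  - replace (2 * S m)%nat with (S (S (2 * m))) by lia.
    rewrite !sum_sel_S, !alt_sum_S, IH by lia.
    rewrite Nat.odd_succ, Nat.even_succ, Nat.odd_even, Nat.even_even.
    unfold ext_angle. rewrite prv_pos by lia.
    replace (S (2 * m) - 1)%nat with (2 * m)%nat by lia. ring.
Qed.

(* The vertex 0 contributes phi 0 - phi (n - 1), so the partial sums carry the
   correction phi (2m + 1) - phi (n - 1), which vanishes once 2m + 2 = n. *)
Lemma sum_sel_even_ext_angle_partial n phi m : (2 * S m <= n)%nat ->
  sum_sel (2 * S m) Nat.even (ext_angle n phi) =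
  alt_sum phi (2 * S m) + phi (2 * m + 1)%nat - phi (n - 1)%nat.
Proof.
  induction m as [|m IH]; intro Hm.
  - unfold alt_sum, sum_sel, ext_angle. simpl. rewrite prv_0 by lia. ring.
  - replace (2 * S (S m))%nat with (S (S (2 * S m))) by lia.
    rewrite !sum_sel_S, !alt_sum_S, IH by lia.
    rewrite Nat.even_succ, Nat.odd_even, Nat.even_even.
    unfold ext_angle. rewrite prv_pos by lia.
    replace (2 * S m - 1)%nat with (2 * m + 1)%nat by lia.
    replace (S (2 * S m)) with (2 * S m + 1)%nat by lia. ring.
Qed.

Lemma ext_angle_sums_even n phi : (1 <= n)%nat -> Nat.even n = true ->
  sum_sel n Nat.even (ext_angle n phi) = alt_sum phi n /\
  sum_sel n Nat.odd (ext_angle n phi) = - alt_sum phi n.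
Proof.
  intros Hn Hev. apply Nat.even_spec in Hev as [m ->].
  destruct m as [|m]; [lia |]. split.
  - rewrite sum_sel_even_ext_angle_partial by lia.
    replace (2 * S m - 1)%nat with (2 * m + 1)%nat by lia. ring.
  - apply sum_sel_odd_ext_angle. lia.
Qed.

Lemma cong_pi_sin x : cong_pi x <-> sin x = 0.
Proof. split; [apply sin_eq_0_1 | apply sin_eq_0_0]. Qed.

Theorem lemma2p2 (n : nat) (B : nat -> vec) (phi : nat -> R) :
  (2 <= n)%nat ->
  (forall i, (i < n)%nat -> B i <> B (nxt n i)) ->
  (forall i, (i < n)%nat -> is_direction (phi i) (side n B i)) ->
  (Nat.odd n = true ->
     exists u, framing n B u /\
       forall v, framing n B v -> same_framing n u v) /\
  (Nat.even n = true ->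
     ((exists u, framing n B u) <->
        (cong_pi (sum_sel n Nat.even (ext_angle n phi)) /\
         cong_pi (sum_sel n Nat.odd (ext_angle n phi)))) /\
     ((exists u, framing n B u) ->
        forall w : vec, is_unit w ->
          exists u, framing n B u /\ u 0%nat = w /\
            forall v, framing n B v -> v 0%nat = w ->
              forall i, (i < n)%nat -> v i = u i)).
Proof.
  (* The sides are nonzero as soon as they have directions. *)
  intros Hn _ Hdir. assert (Hn1 : (1 <= n)%nat) by lia. split.
  - intro Hodd. apply (framing_odd n B phi); [assumption .. |].
    rewrite <- Nat.negb_odd, Hodd. reflexivity.
  - intro Hev. destruct (ext_angle_sums_even n phi Hn1 Hev) as [-> ->].
    rewrite !cong_pi_sin, sin_neg, (framing_even_iff n B phi) by assumption.
    split; [lra |].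
    intros HA w Hw. exists (refl_iter phi w). split; [| split].
    + apply framing_even_start; assumption.
    + reflexivity.
    + intros v Hv <- i Hi. exact (proj1 (framing_refl_iter n B phi Hn1 Hdir v Hv) i Hi).
Qed.
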